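(* Let $\mathcal A=(a_{ij})$ be a symmetric $3\times3$ matrix (indices $0,1,2$) and let $\mathcal B$ be the symmetric matrix with $b_{11}=1$ and all other entries $0$. Let $\mathbf V(s,t)=(s^2,st,t^2)^T$, $\mathbf F(s,t)=(\mathcal A\mathbf V(s,t))\times(\mathcal B\mathbf V(s,t))=(F^{(1)},F^{(2)},F^{(3)})^T$, $Q(s,t)=(F^{(2)})^2-F^{(1)}F^{(3)}$. Put $a_1=a_{00}$, $a_2=a_{01}$, $a_3=a_{02}$, $a_5=a_{12}$, $a_6=a_{22}$, and let $(k_n,l_n)$ be a sequence of nonzero numbers satisfying $$k_{n+1}k_{n-1}=a_3k_n^2+a_5k_nl_n+a_6l_n^2,\qquad l_{n+1}l_{n-1}=a_1k_n^2+a_2k_nl_n+a_3l_n^2 .$$ Then $r_n=-k_{n+1}l_{n+1}k_nl_n$, $s_n=k_n$, $t_n=l_n$ satisfy the system $$r_nr_{n-1}=Q(s_n,t_n),\quad s_{n+1}r_{n-1}=t_{n-1}F^{(1)}(s_n,t_n)-s_{n-1}F^{(2)}(s_n,t_n),\quad t_{n+1}r_{n-1}=t_{n-1}F^{(2)}(s_n,t_n)-s_{n-1}F^{(3)}(s_n,t_n).$$ *)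

From HB Require Import structures.
From mathcomp Require Import all_boot all_order all_algebra.
Set Implicit Arguments. Unset Strict Implicit. Unset Printing Implicit Defensive.
Import GRing.Theory.
Local Open Scope ring_scope.

Definition i0 : 'I_3 := @Ordinal 3 0 isT.
Definition i1 : 'I_3 := @Ordinal 3 1 isT.
Definition i2 : 'I_3 := @Ordinal 3 2 isT.

Definition Bmx (R : fieldType) : 'M[R]_3 := delta_mx i1 i1.

Definition Vvec (R : fieldType) (s t : R) : 'cV[R]_3 :=
  \col_i (if i == i0 then s ^+ 2 else if i == i1 then s * t else t ^+ 2).

Definition cross (R : fieldType) (u v : 'cV[R]_3) : 'cV[R]_3 :=
  \col_i (if i == i0 then u i1 0 * v i2 0 - u i2 0 * v i1 0
          else if i == i1 then u i2 0 * v i0 0 - u i0 0 * v i2 0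
          else u i0 0 * v i1 0 - u i1 0 * v i0 0).

Definition Fvec (R : fieldType) (A : 'M[R]_3) (s t : R) : 'cV[R]_3 :=
  cross (A *m Vvec s t) (Bmx R *m Vvec s t).

Definition F1 (R : fieldType) (A : 'M[R]_3) s t := Fvec A s t i0 0.
Definition F2 (R : fieldType) (A : 'M[R]_3) s t := Fvec A s t i1 0.
Definition F3 (R : fieldType) (A : 'M[R]_3) s t := Fvec A s t i2 0.

Definition Qf (R : fieldType) (A : 'M[R]_3) (s t : R) : R :=
  F2 A s t ^+ 2 - F1 A s t * F3 A s t.

From HB Require Import structures.
From mathcomp Require Import all_boot all_order all_algebra.
From mathcomp Require Import ring.
Import GRing.Theory.
Local Open Scope ring_scope.

(* Since [B V(s,t) = s t e_1], the cross product gives [F = s t (-(A V)_2, 0, (A V)_0)],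
   so [F^(2) = 0] and [Q = (s t)^2 (A V)_2 (A V)_0].  For symmetric [A] the entries
   [(A V)_2] and [(A V)_0] at [(k_n, l_n)] are exactly the right-hand sides of the two
   recurrences, i.e. [k_{n+1} k_{n-1}] and [l_{n+1} l_{n-1}]; after this substitution
   all three equations are polynomial identities. *)

Section CrossWithB.
Variables (R : fieldType) (A : 'M[R]_3) (s t : R).

Lemma mulmx_VvecE i :
  (A *m Vvec s t) i 0 = A i i0 * s ^+ 2 + A i i1 * (s * t) + A i i2 * t ^+ 2.
Proof.
rewrite !mxE !big_ord_recl big_ord0 !mxE /= addr0 addrA.
by congr (A i _ * _ + A i _ * _ + A i _ * _); apply/val_inj.
Qed.

Lemma Bmx_mulmx_VvecE i : (Bmx R *m Vvec s t) i 0 = if i == i1 then s * t else 0.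
Proof.
rewrite !mxE !big_ord_recl big_ord0 /Bmx !mxE /=.
by case: i => [[|[|[|i]]] Hi] //=; ring.
Qed.

Lemma F1E : F1 A s t = - (s * t * (A *m Vvec s t) i2 0).
Proof. by rewrite /F1 /Fvec /cross !Bmx_mulmx_VvecE mxE /=; ring. Qed.

Lemma F2E : F2 A s t = 0.
Proof. by rewrite /F2 /Fvec /cross !Bmx_mulmx_VvecE mxE /=; ring. Qed.

Lemma F3E : F3 A s t = s * t * (A *m Vvec s t) i0 0.
Proof. by rewrite /F3 /Fvec /cross !Bmx_mulmx_VvecE mxE /=; ring. Qed.

Lemma QfE : Qf A s t = (s * t) ^+ 2 * (A *m Vvec s t) i2 0 * (A *m Vvec s t) i0 0.
Proof. by rewrite /Qf F1E F2E F3E; ring. Qed.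

Lemma sym_mulmx_Vvec2E : A^T = A ->
  (A *m Vvec s t) i2 0 = A i0 i2 * s ^+ 2 + A i1 i2 * s * t + A i2 i2 * t ^+ 2.
Proof.
move=> symA; have Asym i j : A i j = A j i by rewrite -{1}symA mxE.
by rewrite mulmx_VvecE (Asym i2 i0) (Asym i2 i1) mulrA.
Qed.

End CrossWithB.

Lemma product_recurrence_system {R : comPzRingType} (k l : R) {kp km lp lm x z : R} :
  kp * km = x -> lp * lm = z ->
  let r := - (kp * lp * k * l) in
  let r' := - (k * l * km * lm) in
  [/\ r * r' = (k * l) ^+ 2 * x * z,
      kp * r' = - (lm * (k * l * x))
    & lp * r' = - (km * (k * l * z))].
Proof. by move=> <- <- r r'; split; rewrite /r /r'; ring. Qed.

Theorem theorem10 (R : fieldType) (A : 'M[R]_3) (k l : int -> R) :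
  A^T = A ->
  (forall n, k n != 0) -> (forall n, l n != 0) ->
  (forall n : int, k (n + 1) * k (n - 1) =
      A i0 i2 * k n ^+ 2 + A i1 i2 * k n * l n + A i2 i2 * l n ^+ 2) ->
  (forall n : int, l (n + 1) * l (n - 1) =
      A i0 i0 * k n ^+ 2 + A i0 i1 * k n * l n + A i0 i2 * l n ^+ 2) ->
  let r := fun n : int => - (k (n + 1) * l (n + 1) * k n * l n) in
  let s := k in
  let t := l in
  forall n : int,
    [/\ r n * r (n - 1) = Qf A (s n) (t n),
        s (n + 1) * r (n - 1) = t (n - 1) * F1 A (s n) (t n) - s (n - 1) * F2 A (s n) (t n)
      & t (n + 1) * r (n - 1) = t (n - 1) * F2 A (s n) (t n) - s (n - 1) * F3 A (s n) (t n)].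
Proof.
move=> symA _ _ rec_k rec_l r s t n.
have rec_kn := rec_k n; rewrite -(sym_mulmx_Vvec2E _ _ _ _ symA) in rec_kn.
have rec_ln := rec_l n; rewrite -mulrA -mulmx_VvecE in rec_ln.
have [Er Es Et] := product_recurrence_system (k n) (l n) rec_kn rec_ln.
rewrite /r /s /t QfE F1E F2E F3E subrK.
by split; [exact: Er | rewrite Es | rewrite Et]; ring.
Qed.
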